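(* Let $(L,\preceq,\bot,\top)$ be a bounded lattice with at least three elements and let $K$ be a block of $L$. If $(L\setminus K)\not\subseteq\{\bot,\top\}$, then $P=(L\setminus K)\cup\{\bot,\top\}$ is a complete block of $L$. Moreover, $L$ can be decomposed into the independent blocks $K$ and $P$, i.e. $K$ and $P$ are independent and $K\cup P=L$.
   Context: For $k\in L$ let ${\uparrow}k=\{x\in L\mid k\preceq x\}$ and ${\downarrow}k=\{x\in L\mid x\preceq k\}$. A block of $L$ is a sublattice $K\subsetneq L$ (a proper subset) such that $K\setminus\{\bot,\top\}\neq\varnothing$ and $({\uparrow}k\cup{\downarrow}k)\setminus\{\bot,\top\}\subseteq K$ for every $k\in K\setminus\{\bot,\top\}$. A block is complete if it contains $\bot$ and $\top$. Two blocks $K_1,K_2$ are independent if $K_1\cap K_2\subseteq\{\bot,\top\}$. *)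

From mathcomp Require Import all_boot all_order.
Set Implicit Arguments. Unset Strict Implicit. Unset Printing Implicit Defensive.
Import Order.TTheory.
Local Open Scope order_scope.

Section Blocks.
Context {disp : Order.disp_t} {L : tbLatticeType disp}.

(* Subsets of L are predicates L -> Prop (L may be infinite). *)

Definition sublattice (K : L -> Prop) : Prop :=
  forall x y, K x -> K y -> K (x `&` y) /\ K (x `|` y).

Definition upset (k : L) : L -> Prop := fun x => k <= x.
Definition downset (k : L) : L -> Prop := fun x => x <= k.

Definition is_bot_or_top (x : L) : Prop := x = \bot \/ x = \top.

Definition is_block (K : L -> Prop) : Prop :=
  [/\ sublattice K,
      (exists x, ~ K x),
      (exists k, K k /\ ~ is_bot_or_top k) &
      (forall k, K k -> ~ is_bot_or_top k ->
         forall x, (upset k x \/ downset k x) -> ~ is_bot_or_top x -> K x)].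

Definition complete_block (K : L -> Prop) : Prop :=
  [/\ is_block K, K \bot & K \top].

Definition independent_blocks (K1 K2 : L -> Prop) : Prop :=
  forall x, K1 x -> K2 x -> is_bot_or_top x.

End Blocks.

(* Every element comparable with a non-trivial element of a block either lies in the
   block or is [\bot] or [\top]. Hence if a non-trivial meet [x `&` y] of two elements
   outside [K] lay in [K], both [x] and [y] would be [\bot] or [\top], and so would their
   meet; dually for joins. The same comparability argument, read from the other side,
   shows that the complement is closed under comparable non-trivial elements. *)
From mathcomp Require Import all_boot all_order.
From Stdlib Require Import Classical.
Set Implicit Arguments. Unset Strict Implicit. Unset Printing Implicit Defensive.
Import Order.TTheory.
Local Open Scope order_scope.

Section BotOrTop.
Context {disp : Order.disp_t} {L : tbLatticeType disp}.
Implicit Types x y : L.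

Lemma is_bot_or_topP x : reflect (is_bot_or_top x) ((x == \bot) || (x == \top)).
Proof. by apply: (iffP orP) => -[/eqP|/eqP]; by [left|right]. Qed.

Lemma meet_bot_or_top x y :
  is_bot_or_top x -> is_bot_or_top y -> is_bot_or_top (x `&` y).
Proof. by move=> [->|->] [->|->]; rewrite ?meet0x ?meetx0 ?meet1x; by [left|right]. Qed.

Lemma join_bot_or_top x y :
  is_bot_or_top x -> is_bot_or_top y -> is_bot_or_top (x `|` y).
Proof. by move=> [->|->] [->|->]; rewrite ?join0x ?joinx1 ?join1x; by [left|right]. Qed.

End BotOrTop.

Definition block_complement {disp : Order.disp_t} {L : tbLatticeType disp}
    (K : L -> Prop) : L -> Prop :=
  fun x => ~ K x \/ is_bot_or_top x.

Section BlockComplement.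
Context {disp : Order.disp_t} {L : tbLatticeType disp}.
Variable K : L -> Prop.
Implicit Types x y m : L.

Local Notation P := (block_complement K).

Lemma block_complement_independent : independent_blocks K P.
Proof. by move=> x Kx []. Qed.

Lemma block_complement_cover x : K x \/ P x.
Proof. by case: (classic (K x)); [left|right; left]. Qed.

Hypothesis K_closed : forall k, K k -> ~ is_bot_or_top k ->
  forall x, (upset k x \/ downset k x) -> ~ is_bot_or_top x -> K x.

Lemma block_complement_comparable x m :
  P x -> K m -> ~ is_bot_or_top m -> (upset m x \/ downset m x) ->
  is_bot_or_top x.
Proof.
move=> [nKx|//] Km nbt_m cmp; case: (is_bot_or_topP x) => // nbt_x.
by case: nKx; apply: (K_closed Km nbt_m cmp).
Qed.

Lemma block_complement_sublattice : sublattice P.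
Proof.
move=> x y Px Py; split.
- case: (is_bot_or_topP (x `&` y)) => [|nbt]; [by right | left => Kxy].
  apply: (nbt); apply: meet_bot_or_top.
  + by apply: (block_complement_comparable Px Kxy nbt); left; apply: leIl.
  + by apply: (block_complement_comparable Py Kxy nbt); left; apply: leIr.
- case: (is_bot_or_topP (x `|` y)) => [|nbt]; [by right | left => Kxy].
  apply: (nbt); apply: join_bot_or_top.
  + by apply: (block_complement_comparable Px Kxy nbt); right; apply: leUl.
  + by apply: (block_complement_comparable Py Kxy nbt); right; apply: leUr.
Qed.

Lemma block_complement_closed m : P m -> ~ is_bot_or_top m ->
  forall x, (upset m x \/ downset m x) -> ~ is_bot_or_top x -> P x.
Proof.
move=> [nKm|//] nbt_m x cmp nbt_x; left => Kx; apply: nKm.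
by apply: (K_closed Kx nbt_x _ nbt_m); case: cmp; [right|left].
Qed.

End BlockComplement.

Lemma block_complement_complete_block {disp : Order.disp_t}
    {L : tbLatticeType disp} (K : L -> Prop) :
  is_block K -> (exists x, ~ K x /\ ~ is_bot_or_top x) ->
  complete_block (block_complement K).
Proof.
move=> [_ _ [k [Kk nbt_k]] K_closed] [w [nKw nbt_w]].
split; [split | by right; left | by right; right].
- exact: block_complement_sublattice.
- by exists k; case.
- by exists w; split; first left.
- exact: block_complement_closed.
Qed.

Theorem proposition21 (disp : Order.disp_t) (L : tbLatticeType disp)
    (K : L -> Prop) :
  (exists a b c : L, [/\ a <> b, a <> c & b <> c]) ->
  is_block K ->
  (exists x : L, ~ K x /\ ~ is_bot_or_top x) ->
  let P : L -> Prop := fun x => ~ K x \/ is_bot_or_top x in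
  [/\ complete_block P, independent_blocks K P & (forall x : L, K x \/ P x)].
Proof.
move=> _ K_block K_not_trivial P; split.
- exact: block_complement_complete_block.
- exact: block_complement_independent.
- exact: block_complement_cover.
Qed.
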